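(* Let $n,k$ be odd integers with $2<2k\le n$. Suppose the integer program $( * )$ has a solution but no trivial solution, and let $(\mathsf{u},\mathsf{v}_+,\mathsf{v}_-,r,t)$ be a solution of $( * )$. Then $$\chi_c(\mathrm{Pet}(n,k))\ \ge\ 2+\frac{4r}{4r^2+2r+1}.$$
   Context: For integers $n,k$ with $2<2k\le n$, the generalized Petersen graph $\mathrm{Pet}(n,k)$ has vertex set $\{u_0,\dots,u_{n-1}\}\cup\{v_0,\dots,v_{n-1}\}$ and edge set $\{u_iu_{i+1}\}\cup\{u_iv_i\}\cup\{v_iv_{i+k}\}$, indices modulo $n$. The integer program $( * )$ is: minimize $\mathsf{u}+\mathsf{v}_++\mathsf{v}_-$ over integers $\mathsf{u},\mathsf{v}_+,\mathsf{v}_-,r\ge 0$ and $t\in\mathbb{Z}$ subject to $\mathsf{u}+k(\mathsf{v}_+-\mathsf{v}_-)=tn$ and $\mathsf{u}+\mathsf{v}_++\mathsf{v}_-=2r+1$. A solution is a minimizer; it is trivial if $\mathsf{u}=0$ or $\mathsf{v}_++\mathsf{v}_-=0$. For integers $p\ge 2q\ge 2$, the circular complete graph $K_{p/q}$ has vertex set $\{0,\dots,p-1\}$ with $i\sim j$ iff $q\le|i-j|\le p-q$; the circular chromatic number $\chi_c(G)$ is the minimum of $p/q$ over all such $p,q$ for which $G$ admits a homomorphism to $K_{p/q}$. *)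

From mathcomp Require Import all_boot all_order all_algebra.
Set Implicit Arguments. Unset Strict Implicit. Unset Printing Implicit Defensive.
Import Order.TTheory GRing.Theory Num.Theory.

(* Vertices of Pet(n,k): inl i = u_i, inr i = v_i, i in {0..n-1}. *)
Definition pet_vertex (n : nat) : finType := ('I_n + 'I_n)%type.

Definition pet_adj (n k : nat) : rel (pet_vertex n) :=
  fun x y =>
    match x, y with
    | inl i, inl j => (j == (i + 1) %% n :> nat) || (i == (j + 1) %% n :> nat)
    | inl i, inr j => i == j :> nat
    | inr i, inl j => i == j :> nat
    | inr i, inr j => (j == (i + k) %% n :> nat) || (i == (j + k) %% n :> nat)
    end.

Definition absdiff (i j : nat) : nat := if i <= j then j - i else i - j.

Definition circ_adj (p q : nat) (i j : 'I_p) : bool :=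
  (q <= absdiff i j) && (absdiff i j <= p - q).

Definition circ_hom (V : finType) (E : rel V) (p q : nat) : Prop :=
  exists f : V -> 'I_p, forall x y, E x y -> circ_adj q (f x) (f y).

(* chi_c(G) >= b: chi_c(G) is the minimum of p/q over all p >= 2q >= 2 with
   G -> K_{p/q}; it is >= b iff every such admissible ratio p/q is >= b. *)
Definition chi_c_ge (V : finType) (E : rel V) (b : rat) : Prop :=
  forall p q : nat, (1 <= q)%N -> (2 * q <= p)%N -> circ_hom E p q ->
    (b <= p%:Q / q%:Q)%R.

Definition ip_feasible (n k u vp vm r : nat) (t : int) : Prop :=
  ((u%:Z + k%:Z * (vp%:Z - vm%:Z))%R = (t * n%:Z)%R) /\ (u + vp + vm = 2 * r + 1)%N.

Definition ip_solution (n k u vp vm r : nat) (t : int) : Prop :=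
  ip_feasible n k u vp vm r t /\
  forall u' vp' vm' r' t', ip_feasible n k u' vp' vm' r' t' ->
    (u + vp + vm <= u' + vp' + vm')%N.

Definition ip_trivial (u vp vm : nat) : Prop := u = 0%N \/ (vp + vm = 0)%N.
Arguments pet_adj n k : clear implicits.

From mathcomp Require Import all_boot all_order all_algebra zify ring lra.
Import Order.TTheory GRing.Theory Num.Theory.
Set Implicit Arguments. Unset Strict Implicit. Unset Printing Implicit Defensive.

(* A homomorphism f from Pet(n,k) to K_{p/q} assigns to every walk a winding
   number: the sum of the circular distances (f y - f x) mod p along its edges,
   divided by p, where every edge contributes between q and p - q.  A feasible
   point of ( * ) yields for each i a closed walk C_i of length 2r+3 (u rim
   steps from u_i, a spoke, v_+ inner steps by +k, v_- inner steps by -k, and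
   the spoke back to u_i).  The walks C_i and C_{i+u} run through the spoke
   u_{i+u} v_{i+u} in opposite directions, so if p/q < (4r+4)/(2r+1) their
   winding numbers have odd sum.  Along i, i+u, i+2u, ... the parity of the
   winding number then flips n times before returning to C_i, impossible for
   n odd.  Hence p/q >= (4r+4)/(2r+1) = 2 + 2/(2r+1), which is stronger than
   the stated bound; only feasibility of ( * ) is used. *)

Section CircularDistance.
Variable p : nat.

Definition cdist (a b : 'I_p) : nat := (b + p - a) %% p.

Lemma cdist_mod (a b : 'I_p) : cdist a b + a = b %[mod p].
Proof.
rewrite modnDml subnK ?modnDr //.
exact: leq_trans (ltnW (ltn_ord a)) (leq_addl _ _).
Qed.

Lemma cdist_small (a b : 'I_p) : a <= b -> cdist a b = b - a.
Proof.
move=> le_ab; rewrite /cdist addnC -addnBA // modnDl modn_small //.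
by rewrite (leq_ltn_trans (leq_subr _ _)).
Qed.

Lemma cdist_large (a b : 'I_p) : b < a -> cdist a b = p - (a - b).
Proof.
move=> lt_ba; rewrite /cdist modn_small; have := ltn_ord a; lia.
Qed.

Lemma cdist_opp (a b : 'I_p) : a != b -> cdist a b + cdist b a = p.
Proof.
case: (ltngtP a b) => [lt_ab|lt_ba|/val_inj->]; last by rewrite eqxx.
- rewrite (cdist_small (ltnW lt_ab)) cdist_large // subnKC //.
  exact: leq_trans (leq_subr _ _) (ltnW (ltn_ord b)).
- rewrite cdist_large // (cdist_small (ltnW lt_ba)) subnK //.
  exact: leq_trans (leq_subr _ _) (ltnW (ltn_ord a)).
Qed.

Lemma circ_adj_cdist q (a b : 'I_p) :
  circ_adj q a b -> q <= cdist a b <= p - q.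
Proof.
rewrite /circ_adj /absdiff; case: (leqP a b) => [le_ab|lt_ba] adj_ab.
  by rewrite (cdist_small le_ab).
rewrite (cdist_large lt_ba); move: adj_ab; have := ltn_ord a; lia.
Qed.

Lemma circ_adj_neq q (a b : 'I_p) : 0 < q -> circ_adj q a b -> a != b.
Proof.
move=> q_gt0 /andP[+ _]; apply: contraTneq => ->.
by rewrite /absdiff leqnn subnn -ltnNge.
Qed.

End CircularDistance.

Section Winding.
Variables (p q : nat) (T : Type) (E : rel T) (f : T -> 'I_p).

Definition winding (x : T) (s : seq T) : nat :=
  sumn (pairmap (fun a b => cdist (f a) (f b)) x s).

Lemma winding_cat x s1 s2 :
  winding x (s1 ++ s2) = winding x s1 + winding (last x s1) s2.
Proof. by rewrite /winding pairmap_cat sumn_cat. Qed.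

Lemma winding_mod x s : winding x s + f x = f (last x s) %[mod p].
Proof.
elim: s x => [|y s IHs] x //=; rewrite -IHs /winding /= addnAC addnC.
by rewrite -modnDmr cdist_mod modnDmr.
Qed.

Lemma dvdn_winding_cycle x s : last x s = x -> p %| winding x s.
Proof.
move=> last_x; have := winding_mod x s; rewrite last_x -{2}(add0n (f x)).
by move/eqP; rewrite eqn_modDr mod0n.
Qed.

Hypothesis f_hom : forall x y, E x y -> circ_adj q (f x) (f y).

Lemma winding_bounds x s :
  path E x s -> size s * q <= winding x s <= size s * (p - q).
Proof.
elim: s x => [|y s IHs] x //= /andP[Exy /IHs/andP[lo hi]].
have /andP[lo1 hi1] := circ_adj_cdist (f_hom Exy).
by rewrite /winding /= !mulSn leq_add // leq_add.
Qed.

Lemma winding_edge x s1 y s2 : path E x (s1 ++ y :: s2) ->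
  exists2 R, winding x (s1 ++ y :: s2) = cdist (f (last x s1)) (f y) + R
           & (size s1 + size s2) * q <= R <= (size s1 + size s2) * (p - q).
Proof.
rewrite cat_path /= => /and3P[path1 _ path2].
exists (winding x s1 + winding y s2); first by rewrite winding_cat /= addnCA.
have /andP[lo1 hi1] := winding_bounds path1.
have /andP[lo2 hi2] := winding_bounds path2.
by rewrite !mulnDl leq_add // leq_add.
Qed.

End Winding.

Lemma odd_shift_period (w : nat -> nat) u n :
  (forall i, odd (w (i + u) + w i)) -> w (n * u) = w 0 -> ~~ odd n.
Proof.
move=> odd_shift period.
have parity j : odd (w (j * u)) = odd j (+) odd (w 0).
  elim: j => [//|j IHj]; rewrite mulSnr.
  move: (odd_shift (j * u)); rewrite oddD IHj /=.
  by case: (odd (w _)); case: (odd j); case: (odd (w 0)).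
by apply/negP => odd_n; move: (parity n); rewrite period odd_n addTb; case: odd.
Qed.

Lemma shared_edge_winding_sum r p q w R :
  (2 * r + 1) * p < (4 * r + 4) * q -> w * p = p + R ->
  (4 * r + 4) * q <= R <= (4 * r + 4) * (p - q) -> w = 2 * r + 3.
Proof.
move=> small_ratio wp /andP[lo hi].
have p_gt0 : 0 < p by nia.
have lt_w : (2 * r + 2) * p < w * p by rewrite wp; nia.
have w_lt : w * p < (2 * r + 4) * p by rewrite wp; nia.
by move: lt_w w_lt; rewrite !ltn_pmul2r //; lia.
Qed.

Section ArithmeticWalk.
Variables (T : Type) (g : nat -> T) (d : nat).

Fixpoint arith_walk (a l : nat) : seq T :=
  if l is l'.+1 then g (a + d) :: arith_walk (a + d) l' else [::].

Lemma size_arith_walk a l : size (arith_walk a l) = l.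
Proof. by elim: l a => //= l IHl a; rewrite IHl. Qed.

Lemma last_arith_walk a l : last (g a) (arith_walk a l) = g (a + l * d).
Proof. by elim: l a => [|l IHl] a /=; rewrite ?addn0 // IHl mulSn addnA. Qed.

Lemma path_arith_walk (e : rel T) a l :
  (forall x, e (g x) (g (x + d))) -> path e (g a) (arith_walk a l).
Proof. by move=> e_step; elim: l a => //= l IHl a; rewrite e_step IHl. Qed.

Lemma arith_walk_mod N a b l : (forall x y, x = y %[mod N] -> g x = g y) ->
  a = b %[mod N] -> arith_walk a l = arith_walk b l.
Proof.
move=> g_mod; elim: l a b => //= l IHl a b eq_ab.
have eq_abd : a + d = b + d %[mod N] by rewrite -modnDml eq_ab modnDml.
by rewrite (g_mod _ _ eq_abd) (IHl _ _ eq_abd).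
Qed.

End ArithmeticWalk.

Section PetersenWalks.
Variables (m k : nat).
Local Notation n := m.+1.
Local Notation G := (pet_adj n k).

Definition outer (x : nat) : pet_vertex n := inl (inZp x).
Definition inner (x : nat) : pet_vertex n := inr (inZp x).

Lemma outer_mod x y : x = y %[mod n] -> outer x = outer y.
Proof. by move=> eq_xy; congr inl; apply: val_inj. Qed.

Lemma inner_mod x y : x = y %[mod n] -> inner x = inner y.
Proof. by move=> eq_xy; congr inr; apply: val_inj. Qed.

Lemma pet_adj_rim x : G (outer x) (outer (x + 1)).
Proof. by rewrite /pet_adj /= modnDml eqxx. Qed.

Lemma pet_adj_spoke x : G (outer x) (inner x).
Proof. by rewrite /pet_adj /=. Qed.

Lemma pet_adj_spokeV x : G (inner x) (outer x).
Proof. by rewrite /pet_adj /=. Qed.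

Lemma pet_adj_inner x : G (inner x) (inner (x + k)).
Proof. by rewrite /pet_adj /= modnDml eqxx. Qed.

Lemma pet_adj_innerV x : k <= n -> G (inner x) (inner (x + (n - k))).
Proof.
move=> k_le_n; apply/orP; right.
by rewrite modnDml -addnA subnK // modnDr.
Qed.

Variables (u vp vm : nat).

Definition pet_path (i : nat) : seq (pet_vertex n) :=
  arith_walk outer 1 i u ++ inner (i + u) ::
  arith_walk inner k (i + u) vp ++ arith_walk inner (n - k) (i + u + vp * k) vm.

Definition pet_cycle (i : nat) : seq (pet_vertex n) := rcons (pet_path i) (outer i).

Lemma pet_cycle_mod i j : i = j %[mod n] -> pet_cycle i = pet_cycle j.
Proof.
move=> eq_ij.
have eq_iju : i + u = j + u %[mod n] by rewrite -modnDml eq_ij modnDml.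
have eq_ijuv : i + u + vp * k = j + u + vp * k %[mod n].
  by rewrite -modnDml eq_iju modnDml.
rewrite /pet_cycle /pet_path (outer_mod eq_ij) (inner_mod eq_iju).
rewrite (arith_walk_mod _ _ (@outer_mod) eq_ij).
rewrite (arith_walk_mod _ _ (@inner_mod) eq_iju).
by rewrite (arith_walk_mod _ _ (@inner_mod) eq_ijuv).
Qed.

Hypothesis k_le_n : k <= n.
Hypothesis closing : u + vp * k + vm * (n - k) = 0 %[mod n].

Lemma last_pet_path i : last (outer i) (pet_path i) = inner i.
Proof.
rewrite last_cat /= last_cat !last_arith_walk; apply: inner_mod.
by rewrite -!addnA -modnDmr !addnA closing addn0.
Qed.

Lemma path_pet_cycle i : path G (outer i) (pet_cycle i).
Proof.
rewrite rcons_path last_pet_path pet_adj_spokeV andbT.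
rewrite cat_path path_arith_walk ?last_arith_walk /=; last exact: pet_adj_rim.
rewrite muln1 eqxx cat_path last_arith_walk.
rewrite path_arith_walk /=; last exact: pet_adj_inner.
by rewrite path_arith_walk // => x; apply: pet_adj_innerV.
Qed.

Variables (p q : nat) (f : pet_vertex n -> 'I_p).
Hypothesis q_gt0 : 0 < q.
Hypothesis f_hom : forall x y, G x y -> circ_adj q (f x) (f y).

Lemma winding_pet_cycle_spoke i : exists2 R,
    winding f (outer i) (pet_cycle i)
      = cdist (f (outer (i + u))) (f (inner (i + u))) + R
  & (u + vp + vm + 1) * q <= R <= (u + vp + vm + 1) * (p - q).
Proof.
have := path_pet_cycle i; rewrite /pet_cycle /pet_path rcons_cat rcons_cons.
move=> /(winding_edge f_hom) [R eqR bdR]; exists R.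
  by rewrite eqR last_arith_walk muln1.
by move: bdR; rewrite size_rcons size_cat !size_arith_walk addnS addnA addn1.
Qed.

Lemma winding_pet_cycle_last i : exists2 R,
    winding f (outer i) (pet_cycle i) = cdist (f (inner i)) (f (outer i)) + R
  & (u + vp + vm + 1) * q <= R <= (u + vp + vm + 1) * (p - q).
Proof.
have := path_pet_cycle i; rewrite /pet_cycle -cats1.
move=> /(winding_edge f_hom) [R eqR bdR]; exists R.
  by rewrite eqR last_pet_path.
move: bdR; rewrite addn0 /pet_path size_cat /= size_cat !size_arith_walk.
by rewrite addnS addnA addn1.
Qed.

Lemma pet_circular_ratio r : odd n -> u + vp + vm = 2 * r + 1 ->
  (4 * r + 4) * q <= (2 * r + 1) * p.
Proof.
move=> odd_n size_uv; rewrite leqNgt; apply/negP => small_ratio.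
pose w i := winding f (outer i) (pet_cycle i) %/ p.
have wE i : w i * p = winding f (outer i) (pet_cycle i).
  by rewrite divnK // dvdn_winding_cycle // /pet_cycle last_rcons.
have w_shift i : w (i + u) + w i = 2 * r + 3.
  have [R1 W1 bd1] := winding_pet_cycle_spoke i.
  have [R2 W2 bd2] := winding_pet_cycle_last (i + u).
  have opp := cdist_opp (circ_adj_neq q_gt0 (f_hom (pet_adj_spoke (i + u)))).
  apply: (shared_edge_winding_sum small_ratio (R := R1 + R2)).
    by rewrite mulnDl !wE W1 W2 addnACA [X in X + _]addnC opp [R2 + R1]addnC.
  move: bd1 bd2; rewrite size_uv => /andP[lo1 hi1] /andP[lo2 hi2].
  have -> : 4 * r + 4 = (2 * r + 1 + 1) + (2 * r + 1 + 1) by lia.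
  by apply/andP; split; rewrite mulnDl; apply: leq_add.
have n_u_mod : n * u = 0 %[mod n] by rewrite modnMr mod0n.
suff: ~~ odd n by rewrite odd_n.
apply: (@odd_shift_period w u) => [i|]; first by rewrite w_shift oddD oddM.
by rewrite /w (outer_mod n_u_mod) (pet_cycle_mod n_u_mod).
Qed.

End PetersenWalks.

Lemma ip_feasible_closing n k u vp vm r t : k <= n ->
  ip_feasible n k u vp vm r t -> u + vp * k + vm * (n - k) = 0 %[mod n].
Proof.
move=> k_le_n [lin _]; rewrite mod0n; apply/eqP.
have eqZ : ((u + vp * k + vm * (n - k))%:Z = (t + vm%:Z) * n%:Z)%R.
  by rewrite mulnBr; nia.
have : (n%:Z %| (u + vp * k + vm * (n - k))%:Z)%Z by rewrite eqZ dvdz_mull.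
by rewrite dvdzE.
Qed.

Lemma ratio_lower_bound (r p q : nat) :
  0 < q -> (4 * r + 4) * q <= (2 * r + 1) * p ->
  (2 + 4 * r%:Q / (4 * r%:Q ^+ 2 + 2 * r%:Q + 1) <= p%:Q / q%:Q)%R.
Proof.
move=> q_gt0 le_pq; set x := (r%:Q)%R; set D := (4 * x ^+ 2 + 2 * x + 1)%R.
have x_ge0 : (0 <= x)%R by rewrite ler0n.
have D_gt0 : (0 < D)%R by rewrite /D; nra.
have le_b : ((2 + 4 * x / D) * (2 * x + 1) <= 4 * x + 4)%R.
  have -> : (2 + 4 * x / D = (8 * x ^+ 2 + 8 * x + 2) / D)%R.
    by rewrite /D; field; rewrite gt_eqF.
  rewrite mulrAC ler_pdivrMr // /D; nra.
have le_pqQ : ((4 * x + 4) * q%:Q <= (2 * x + 1) * p%:Q)%R.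
  by rewrite /x -!pmulrn; move: le_pq; rewrite -(ler_nat rat) !natrM !natrD; nra.
rewrite ler_pdivlMr ?ltr0n // -(@ler_pM2r _ (2 * x + 1)) ?ltr_wpDl //; last lra.
have q_ge0 : (0 <= q%:Q)%R by rewrite ler0n.
nra.
Qed.

Theorem corollary4 (n k : nat) :
  odd n -> odd k -> (2 < 2 * k)%N -> (2 * k <= n)%N ->
  (exists u vp vm r t, ip_solution n k u vp vm r t) ->
  (forall u vp vm r t, ip_solution n k u vp vm r t -> ~ ip_trivial u vp vm) ->
  forall (u vp vm r : nat) (t : int), ip_solution n k u vp vm r t ->
    chi_c_ge (pet_adj n k)
      (2 + (4 * r%:Q) / (4 * r%:Q ^+ 2 + 2 * r%:Q + 1))%R.
Proof.
move=> odd_n _ _ le_2k_n _ _ u vp vm r t [feasible _] p q q_gt0 _ [f f_hom].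
case: n odd_n le_2k_n feasible f f_hom => [//|m] odd_n le_2k_n feasible f f_hom.
have k_le_n : k <= m.+1 by lia.
apply: ratio_lower_bound => //.
have closing := ip_feasible_closing k_le_n feasible.
exact: (pet_circular_ratio k_le_n closing q_gt0 f_hom odd_n feasible.2).
Qed.
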